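(* Let $G=(V,E)$ be a strongly connected digraph and $s\in V$. For all $v,w\in V$: if $v \leftrightarrow_{\mathrm{2e}} w$ then $T(v)=T(w)$ and $T^R(v)=T^R(w)$.
   Context: For a digraph $G=(V,E)$ and $s\in V$ with every vertex reachable from $s$, $G(s)$ is the flow graph with start vertex $s$; $u$ dominates $w$ if every path from $s$ to $w$ contains $u$; the dominator tree $D(s)$ is the rooted tree on $V$ with root $s$ in which $u$ is an ancestor of $w$ iff $u$ dominates $w$; $d(w)$ is the parent of $w\neq s$. An edge $(u,w)$ is a bridge of $G(s)$ if every path from $s$ to $w$ contains it (then $u=d(w)$). A vertex $w\neq s$ is marked if $(d(w),w)$ is a bridge of $G(s)$. Deleting from $D(s)$ all edges $(d(w),w)$ with $w$ marked decomposes $D(s)$ into a forest of subtrees, each rooted at $s$ or at a marked vertex; $T(v)$ denotes the subtree containing $v$, and $r_v$ its root. $G^R$ is $G$ with all edges reversed; $D^R(s)$ is the dominator tree of $G^R(s)$, marked vertices of $D^R(s)$ are defined via bridges of $G^R(s)$, and $T^R(v)$ is the subtree containing $v$ in the analogous decomposition of $D^R(s)$. For vertices $v,w$, $v \leftrightarrow_{\mathrm{2e}} w$ means $v=w$, or there are two edge-disjoint directed paths from $v$ to $w$ and two from $w$ to $v$. *)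

(* Digraphs are multigraphs: vertex type V, edge type Ed,
   with source/target maps. *)
From mathcomp Require Import all_boot.
From Stdlib Require Import Relation_Operators.
Set Implicit Arguments. Unset Strict Implicit. Unset Printing Implicit Defensive.

Section Digraph.
Variables (V Ed : finType) (src tgt : Ed -> V).

Fixpoint walk (u : V) (p : seq Ed) (w : V) : Prop :=
  match p with
  | [::] => u = w
  | e :: p' => src e = u /\ walk (tgt e) p' w
  end.

Definition walk_verts (u : V) (p : seq Ed) : seq V := u :: map tgt p.

Definition strongly_connected : Prop := forall u w, exists p, walk u p w.

Definition dominates (s u w : V) : Prop :=
  forall p, walk s p w -> u \in walk_verts s p.

(* d(w) = u: u is the parent of w in the dominator tree D(s),
   i.e. the immediate dominator of w *)
Definition idom (s w u : V) : Prop :=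
  w <> s /\ u <> w /\ dominates s u w /\
  (forall x, x <> w -> dominates s x w -> dominates s x u).

Definition bridge (s : V) (e : Ed) : Prop :=
  forall p, walk s p (tgt e) -> e \in p.

Definition marked (s w : V) : Prop :=
  w <> s /\ exists u e, idom s w u /\ src e = u /\ tgt e = w /\ bridge s e.

Definition kept_tree_edge (s u w : V) : Prop := idom s w u /\ ~ marked s w.

(* T(v) = T(w): v and w lie in the same subtree of the forest obtained
   from D(s) by deleting the edges (d(w), w) with w marked *)
Definition same_subtree (s v w : V) : Prop :=
  clos_refl_sym_trans V (kept_tree_edge s) v w.

Definition edge_disjoint (p q : seq Ed) : Prop := forall e, e \in p -> e \notin q.

Definition two_edge_paths (v w : V) : Prop :=
  exists p q, walk v p w /\ walk v q w /\ edge_disjoint p q.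

Definition two_edge_conn (v w : V) : Prop :=
  v = w \/ (two_edge_paths v w /\ two_edge_paths w v).

End Digraph.

(* Every vertex v lies in the same subtree as its root r_v, the deepest
   dominator of v that is s or marked.  If r_v is marked, then every path from
   s to v uses the bridge entering r_v; since the two edge-disjoint paths from
   w to v cannot both use it, a path from s to w avoiding r_v would extend to a
   path from s to v avoiding it.  Hence r_v dominates w, so r_v dominates r_w;
   symmetrically r_w dominates r_v, and r_v = r_w.  The reverse graph is
   handled by reversing all walks. *)
From mathcomp Require Import all_boot.
From Stdlib Require Import Relation_Operators Classical.
Set Implicit Arguments. Unset Strict Implicit. Unset Printing Implicit Defensive.

Section Walks.
Variables (V Ed : finType) (src tgt : Ed -> V).
Local Notation walk := (walk src tgt).
Local Notation verts := (walk_verts tgt).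

Lemma walk_cat a p b q c : walk a p b -> walk b q c -> walk a (p ++ q) c.
Proof.
elim: p a => [|e p IH] a /=; first by move=> ->.
by move=> [-> Hw] Hq; split; last exact: IH.
Qed.

Lemma walk_verts_cat a p q : verts a (p ++ q) = verts a p ++ map tgt q.
Proof. by rewrite /walk_verts map_cat. Qed.

Lemma mem_walk_verts_end a p b : walk a p b -> b \in verts a p.
Proof.
elim: p a => [|e p IH] a /= => [->|[_ /IH]]; first exact: mem_head.
by rewrite /walk_verts /= !in_cons => ->; rewrite orbT.
Qed.

Lemma walk_splitP a p b u : walk a p b -> u \in verts a p ->
  exists p1 p2, [/\ p = p1 ++ p2, walk a p1 u & walk u p2 b].
Proof.
elim: p a => [|e p IH] a /=.
  by move=> ->; rewrite /walk_verts inE => /eqP ->; exists [::], [::].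
move=> [He Hw]; rewrite /walk_verts /= in_cons => /orP [/eqP ->|/(IH _ Hw)].
  by exists [::], (e :: p).
by move=> [p1 [p2 [-> H1 H2]]]; exists (e :: p1), p2.
Qed.

Lemma walk_rcons a p e b : walk a (rcons p e) b <-> walk a p (src e) /\ tgt e = b.
Proof.
elim: p a => [|e' p IH] a /=; first by split=> [[-> ->]|[-> ->]].
by rewrite IH; split=> [[-> []]|[[-> ?] ?]].
Qed.

Lemma walk_split_last (P : V -> Prop) a p b : P a -> walk a p b ->
  exists p1 p2 u, [/\ p = p1 ++ p2, walk a p1 u, walk u p2 b, P u &
    forall x, x \in map tgt p2 -> ~ P x].
Proof.
move=> Pa; elim/last_ind: p b => [|p e IH] b /=.
  by move=> <-; exists [::], [::], a.
move/walk_rcons=> [Hp <-]; have [Pt|nPt] := classic (P (tgt e)).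
  exists (rcons p e), [::], (tgt e); split=> //; first by rewrite cats0.
  exact/walk_rcons.
have [p1 [p2 [u [-> H1 H2 Pu Hn]]]] := IH _ Hp.
exists p1, (rcons p2 e), u; split=> //; first by rewrite rcons_cat.
  exact/walk_rcons.
by move=> x; rewrite map_rcons mem_rcons in_cons => /orP [/eqP ->|/Hn].
Qed.

End Walks.

Lemma walk_rev (V Ed : finType) (src tgt : Ed -> V) a p b :
  walk src tgt a p b -> walk tgt src b (rev p) a.
Proof.
elim: p a => [|e p IH] a /= => [->|[He /IH Hw]] //.
by rewrite rev_cons -cats1; apply: (walk_cat Hw) => /=.
Qed.

Lemma two_edge_paths_rev (V Ed : finType) (src tgt : Ed -> V) v w :
  two_edge_paths src tgt v w -> two_edge_paths tgt src w v.
Proof.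
move=> [p [q [P [Q D]]]]; exists (rev p), (rev q).
do !split; try exact: walk_rev.
by move=> e; rewrite !mem_rev; apply: D.
Qed.

Lemma two_edge_conn_rev (V Ed : finType) (src tgt : Ed -> V) v w :
  two_edge_conn src tgt v w -> two_edge_conn tgt src v w.
Proof.
by case=> [->|[Hvw Hwv]]; [left | right; split; apply: two_edge_paths_rev].
Qed.

Section Dominators.
Variables (V Ed : finType) (src tgt : Ed -> V) (s : V).
Local Notation walk := (walk src tgt).
Local Notation dominates := (dominates src tgt s).
Local Notation idom := (idom src tgt s).
Local Notation marked := (marked src tgt s).

Lemma dominates_refl v : dominates v v.
Proof. by move=> p /mem_walk_verts_end. Qed.

Lemma dominates_trans x u v : dominates x u -> dominates u v -> dominates x v.
Proof.
move=> Hxu Huv p Hp; have [p1 [p2 [-> /Hxu Hx _]]] := walk_splitP Hp (Huv p Hp).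
by rewrite walk_verts_cat mem_cat Hx.
Qed.

Lemma start_dominates v : dominates s v.
Proof. by move=> p _; exact: mem_head. Qed.

Lemma dominates_antisym a b p : walk s p b ->
  dominates a b -> dominates b a -> a = b.
Proof.
have [n] := ubnP (size p); elim: n p => // n IH p; rewrite ltnS => Hn Hp Hab Hba.
have [q1 [q2 [Ep Q1 Q2]]] := walk_splitP Hp (Hab _ Hp).
case: q2 Ep Q2 => [_ //|e q2 Ep _].
have [r1 [r2 [Eq R1 _]]] := walk_splitP Q1 (Hba _ Q1).
apply: (IH r1) => //; apply: leq_trans Hn.
by rewrite Ep Eq !size_cat /= addnS ltnS -addnA leq_addr.
Qed.

(* The immediate dominator is the last proper dominator of v on any walk to v. *)
Lemma idom_exists v p : v <> s -> walk s p v ->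
  exists u p1, [/\ idom v u, walk s p1 u & size p1 < size p].
Proof.
move=> Hvs Hp.
have [|p1 [p2 [u [Ep H1 H2 [Huv Hu] Hn]]]] :=
  walk_split_last (P := fun x => x <> v /\ dominates x v) _ Hp.
  by split; [move=> E; apply: Hvs | exact: start_dominates].
exists u, p1; split=> //.
  do 3!split=> //; move=> x Hxv Hx q Hq.
  have := Hx _ (walk_cat Hq H2); rewrite walk_verts_cat mem_cat.
  by case/orP=> // /Hn [].
case: p2 Ep H2 {Hn} => [_ /= Euv|e p2 -> _]; first by case: Huv.
by rewrite size_cat /= addnS ltnS leq_addr.
Qed.

(* [subtree_root v r] says that r is the root r_v of T(v). *)
Definition subtree_root (v r : V) : Prop :=
  [/\ r = s \/ marked r, dominates r v,
      forall x, marked x -> dominates x v -> dominates x r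
    & same_subtree src tgt s v r].

Lemma subtree_root_exists v p : walk s p v -> exists r, subtree_root v r.
Proof.
have [n] := ubnP (size p); elim: n v p => // n IH v p; rewrite ltnS => Hn Hp.
have [->|Hvs] := eqVneq v s.
  by exists s; split; [left | exact: dominates_refl | | exact: rst_refl].
have [Hm|Hm] := classic (marked v).
  by exists v; split; [right | exact: dominates_refl | | exact: rst_refl].
have [u [p1 [Hid H1 Hs]]] := idom_exists (elimN eqP Hvs) Hp.
have [r [Hr Hru Hdeep Hur]] := IH u p1 (leq_trans Hs Hn) H1.
have [_ [_ [Huv Hlast]]] := Hid.
exists r; split=> //.
- exact: dominates_trans Hru Huv.
- move=> x Hx Hxv; apply: Hdeep (Hx) (Hlast x _ Hxv) => Exv.
  by apply: Hm; rewrite -Exv.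
- by apply: rst_trans Hur; apply/rst_sym/rst_step; split.
Qed.

(* Both disjoint paths from w to v would otherwise use the bridge entering r. *)
Lemma marked_dominates_two_edge_paths r v w :
  marked r -> dominates r v -> two_edge_paths src tgt w v -> dominates r w.
Proof.
move=> [_ [u [e [_ [_ [Ht Hb]]]]]] Hrv [q1 [q2 [Q1 [Q2 Hd]]]] p Hp.
apply/negPn/negP => Hr.
have bridge_in q : walk w q v -> e \in q.
  move=> Hq; have Hpq := walk_cat Hp Hq.
  have [a1 [a2 [E A1 _]]] := walk_splitP Hpq (Hrv _ Hpq).
  have : e \in p ++ q by rewrite E mem_cat Hb ?Ht.
  rewrite mem_cat => /orP [He|//]; case/negP: Hr.
  by rewrite /walk_verts in_cons -Ht map_f ?orbT.
by have := Hd _ (bridge_in _ Q1); rewrite bridge_in.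
Qed.

Lemma subtree_root_dominates v w rv rw : two_edge_paths src tgt w v ->
  subtree_root v rv -> subtree_root w rw -> dominates rv rw.
Proof.
move=> Hwv [[->|Hm] Hrv _ _] [_ _ Hdeep _]; first exact: start_dominates.
exact/Hdeep/(marked_dominates_two_edge_paths Hm Hrv Hwv).
Qed.

Lemma two_edge_conn_same_subtree v w : (forall x, exists p, walk s p x) ->
  two_edge_conn src tgt v w -> same_subtree src tgt s v w.
Proof.
move=> Hreach [->|[Hvw Hwv]]; first exact: rst_refl.
have [rv Rv] : exists rv, subtree_root v rv.
  by have [pv /subtree_root_exists] := Hreach v.
have [rw Rw] : exists rw, subtree_root w rw.
  by have [pw /subtree_root_exists] := Hreach w.
have Erv : rv = rw.
  have [pr Hpr] := Hreach rw.
  apply: dominates_antisym Hpr _ _.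
    exact: subtree_root_dominates Hwv Rv Rw.
  exact: subtree_root_dominates Hvw Rw Rv.
case: Rv Rw => _ _ _ Svr [_ _ _ Swr]; rewrite Erv in Svr.
by apply: rst_trans Svr _; apply: rst_sym.
Qed.

End Dominators.

Theorem mainTheorem5 (V Ed : finType) (src tgt : Ed -> V) (s : V) :
  strongly_connected src tgt ->
  forall v w : V, two_edge_conn src tgt v w ->
    same_subtree src tgt s v w /\ same_subtree tgt src s v w.
Proof.
move=> SC v w Hvw; split; apply: two_edge_conn_same_subtree.
- exact: SC.
- exact: Hvw.
- by move=> x; have [p Hp] := SC x s; exists (rev p); exact: walk_rev.
- exact: two_edge_conn_rev.
Qed.
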